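(* Let $H$ be an abelian group with an alternating $\mathbb{Z}$-bilinear form $\langle-,-\rangle$, and let $f:H^{(1)}\to\mathbb{Z}$ be a function such that $f(u+v)=f(u)+f(v)$ for all $u,v\in H^{(1)}$ with $\langle u,v\rangle\neq0$. Then $f(u+v)=f(u)+f(v)$ for all $u,v\in H^{(1)}$ with $u+v\in H^{(1)}$, and $f(nu)=nf(u)$ for all $u\in H^{(1)}$ and $n\in\mathbb{Z}\setminus\{0\}$.
   Context: $\mu:H\to\mathrm{Hom}_{\mathbb{Z}}(H,\mathbb{Z})$, $\mu(x)(y)=\langle x,y\rangle$; $H^{(1)}:=H\setminus\ker\mu$. *)

From mathcomp Require Import all_boot all_order all_algebra.
Set Implicit Arguments. Unset Strict Implicit. Unset Printing Implicit Defensive.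
Import Order.TTheory GRing.Theory Num.Theory.
Local Open Scope ring_scope.

Definition bilinear_form (H : zmodType) (b : H -> H -> int) : Prop :=
  (forall x y z, b (x + y) z = b x z + b y z) /\
  (forall x y z, b x (y + z) = b x y + b x z).

Definition alternating (H : zmodType) (b : H -> H -> int) : Prop :=
  forall x, b x x = 0.

Definition mu (H : zmodType) (b : H -> H -> int) (x : H) : H -> int :=
  fun y => b x y.

Definition H1 (H : zmodType) (b : H -> H -> int) (x : H) : Prop :=
  mu b x <> (fun _ => 0).

From mathcomp Require Import all_boot all_order all_algebra.
From mathcomp Require Import zify.
From Stdlib Require Import Classical FunctionalExtensionality.
Import Order.TTheory GRing.Theory Num.Theory.
Local Open Scope ring_scope.

Set Implicit Arguments. Unset Strict Implicit.

(* If <u, v> = 0, pick w pairing nontrivially with u, v and u + v; then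
   f(u + v) + f(w) = f(u + v + w) = f(u) + f(v + w) = f(u) + f(v) + f(w), every
   split being between elements with nonzero pairing.  Such a w exists because
   three nonzero homomorphisms H -> Z cannot cover the four points w + n z,
   n = 0..3, with their kernels once w avoids two of them and z the third.
   Additivity on H^(1) then gives f(-u) = -f(u), and f(n u) = n f(u) by
   induction, since <n u, u> = 0 while n u stays in H^(1). *)

Section CommonNonzero.
Variable H : zmodType.
Implicit Types phi psi chi : H -> int.

Lemma common_nonzero2 phi psi :
  {morph phi : x y / x + y} -> {morph psi : x y / x + y} ->
  (exists x, phi x <> 0) -> (exists y, psi y <> 0) ->
  exists w, phi w <> 0 /\ psi w <> 0.
Proof.
move=> phiD psiD [x phix] [y psiy].
have [psix|] := eqVneq (psi x) 0; last by exists x; split=> //; apply/eqP.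
have [phiy|] := eqVneq (phi y) 0; last by exists y; split=> //; apply/eqP.
by exists (x + y); rewrite phiD psiD phiy psix; split; lia.
Qed.

Lemma common_nonzero3 phi psi chi :
  {morph phi : x y / x + y} -> {morph psi : x y / x + y} ->
  {morph chi : x y / x + y} ->
  (exists x, phi x <> 0) -> (exists y, psi y <> 0) -> (exists z, chi z <> 0) ->
  exists w, [/\ phi w <> 0, psi w <> 0 & chi w <> 0].
Proof.
move=> phiD psiD chiD ex ey [z chiz].
have [w [phiw psiw]] := common_nonzero2 phiD psiD ex ey.
(* each of the three values is affine in n along w + n z and vanishes for at
   most one n, so one of n = 0, 1, 2, 3 works *)
have : (phi w <> 0 /\ psi w <> 0 /\ chi w <> 0) \/
  (phi w + phi z <> 0 /\ psi w + psi z <> 0 /\ chi w + chi z <> 0) \/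
  (phi w + phi z + phi z <> 0 /\ psi w + psi z + psi z <> 0 /\
    chi w + chi z + chi z <> 0) \/
  (phi w + phi z + phi z + phi z <> 0 /\ psi w + psi z + psi z + psi z <> 0 /\
    chi w + chi z + chi z + chi z <> 0) by lia.
case=> [|[|[|]]] [h1 [h2 h3]]; [exists w | exists (w + z) | exists (w + z + z)
  | exists (w + z + z + z)]; by rewrite ?phiD ?psiD ?chiD.
Qed.

End CommonNonzero.

Section AlternatingForm.
Variables (H : zmodType) (b : H -> H -> int).
Hypotheses (hbil : bilinear_form b) (halt : alternating b).

Let bDl x y z : b (x + y) z = b x z + b y z. Proof. exact: hbil.1. Qed.
Let bDr x y z : b x (y + z) = b x y + b x z. Proof. exact: hbil.2. Qed.

Lemma form0l y : b 0 y = 0.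
Proof. by have := bDl 0 0 y; rewrite addr0; lia. Qed.

Lemma formNl x y : b (- x) y = - b x y.
Proof. by have := bDl x (- x) y; rewrite subrr form0l; lia. Qed.

Lemma formMnl x y n : b (x *+ n) y = b x y *+ n.
Proof.
elim: n => [|n IHn]; first by rewrite !mulr0n form0l.
by rewrite !mulrS bDl IHn.
Qed.

Lemma form_skew x y : b y x = - b x y.
Proof. by have := halt (x + y); rewrite bDl !bDr (halt x) (halt y); lia. Qed.

Lemma H1P x : H1 b x <-> exists y, b x y <> 0.
Proof.
split=> [Hx | [y bxy] mux0]; last first.
  by apply: bxy; exact: (congr1 (fun g => g y) mux0).
apply: NNPP => nokernel; apply: Hx; apply: functional_extensionality => y.
by apply: NNPP => bxy; apply: nokernel; exists y.
Qed.

Lemma H1_pairing x y : b x y <> 0 -> H1 b x.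
Proof. by move=> bxy; apply/H1P; exists y. Qed.

Lemma H1_pairing_r x y : b x y <> 0 -> H1 b y.
Proof. by move=> bxy; apply: (@H1_pairing _ x); rewrite form_skew; lia. Qed.

Lemma H1_common_pairing u v : H1 b u -> H1 b v -> H1 b (u + v) ->
  exists w, [/\ b u w <> 0, b v w <> 0 & b (u + v) w <> 0].
Proof.
by move=> /H1P ? /H1P ? /H1P ?; apply: common_nonzero3 => //; apply: bDr.
Qed.

Variable f : H -> int.
Hypothesis hf : forall u v, H1 b u -> H1 b v -> b u v <> 0 ->
  f (u + v) = f u + f v.

Let f_pairing u v : b u v <> 0 -> f (u + v) = f u + f v.
Proof.
move=> buv; apply: hf => //.
- exact: H1_pairing buv.
- exact: H1_pairing_r buv.
Qed.

Lemma f_additive u v : H1 b u -> H1 b v -> H1 b (u + v) ->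
  f (u + v) = f u + f v.
Proof.
move=> Hu Hv Huv; have [buv0|] := eqVneq (b u v) 0; last by move/eqP/f_pairing.
have [w [buw bvw buvw]] := H1_common_pairing Hu Hv Huv.
have f_uvw : f (u + v + w) = f (u + v) + f w by apply: f_pairing.
have f_vw : f (v + w) = f v + f w by apply: f_pairing.
have f_u_vw : f (u + (v + w)) = f u + f (v + w).
  by apply: f_pairing; rewrite bDr buv0; lia.
by move: f_u_vw; rewrite addrA f_uvw f_vw; lia.
Qed.

Lemma f_opp u : H1 b u -> f (- u) = - f u.
Proof.
move=> /H1P [w buw].
have : f (- u + (u + w)) = f (- u) + f (u + w).
  by apply: f_pairing; rewrite formNl bDr halt; lia.
by rewrite addKr (f_pairing buw); lia.
Qed.

Lemma H1_mulrS u n : H1 b u -> H1 b (u *+ n.+1).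
Proof.
move=> /H1P [w buw]; apply/H1P; exists w.
by rewrite formMnl; apply/eqP; rewrite mulrn_eq0; apply/eqP.
Qed.

Lemma f_mulrS u n : H1 b u -> f (u *+ n.+1) = f u *+ n.+1.
Proof.
move=> Hu; elim: n => [|n IHn]; first by rewrite !mulr1n.
have Hsum : H1 b (u *+ n.+1 + u) by rewrite -mulrSr; apply: H1_mulrS.
rewrite mulrSr f_additive ?IHn -?mulrSr //; exact: H1_mulrS.
Qed.

End AlternatingForm.

Theorem lemma5p3 (H : zmodType) (b : H -> H -> int)
  (hbil : bilinear_form b) (halt : alternating b)
  (f : H -> int)
  (hf : forall u v, H1 b u -> H1 b v -> b u v <> 0 -> f (u + v) = f u + f v) :
  (forall u v, H1 b u -> H1 b v -> H1 b (u + v) -> f (u + v) = f u + f v) /\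
  (forall (u : H) (n : int), H1 b u -> n <> 0 -> f (u *~ n) = f u *~ n).
Proof.
split=> [u v|]; first exact: (f_additive hbil halt hf).
move=> u [[|n]|n] Hu n0 //; first exact: (f_mulrS hbil halt hf n Hu).
rewrite !NegzE !mulrNz -!pmulrn -(f_mulrS hbil halt hf n Hu).
by apply: (f_opp hbil halt hf); apply: (H1_mulrS hbil).
Qed.
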